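(* Let $K$ be a finite group and let $A\subseteq K$ be such that $L:=L(\{1\}\cup A)$ is a reflection system for $K$. If $x\in L$, then $\{1,x\}\cup xA$ generates the reflection system $xL$ for $K$ and $\{1,x\}\cup Ax$ generates the reflection system $Lx$ for $K$, i.e. $L(\{1,x\}\cup xA)=xL$ and $L(\{1,x\}\cup Ax)=Lx$, and both are reflection systems for $K$ equivalent to (but possibly not equal to) $L$.
   Context: For a group $K$ and $a,b\in K$ put $a\circ b:=ab^{-1}a$. For $X\subseteq K$, $L(X)$ denotes the closure of $X$ under $\circ$, i.e. the smallest subset of $K$ containing $X$ and closed under $\circ$; one says $X$ generates $L(X)$. A reflection system for a finite group $K$ is a subset $L\subseteq K$ such that (1) $L$ generates $K$ as a group, (2) $L$ is closed under $\circ$, and (3) $1\in L$. Two reflection systems $L,L'$ for $K$ are called equivalent if $L'=\phi(xL)$ or $L'=\phi(Lx)$ for some $x\in L$ and some automorphism $\phi$ of $K$. *)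

From mathcomp Require Import all_boot all_fingroup.
Set Implicit Arguments. Unset Strict Implicit. Unset Printing Implicit Defensive.
Local Open Scope group_scope.

Section Refl.
Variable gT : finGroupType.

Definition circ (a b : gT) : gT := a * b^-1 * a.

Definition circ_closed (Y : {set gT}) : bool :=
  [forall a in Y, forall b in Y, circ a b \in Y].

Definition refl_closure (X : {set gT}) : {set gT} :=
  \bigcap_(Y : {set gT} | (X \subset Y) && circ_closed Y) Y.

Definition reflection_system (K : {group gT}) (L : {set gT}) : Prop :=
  [/\ L \subset K, <<L>> = K, circ_closed L & 1 \in L].

Definition refl_equivalent (K : {group gT}) (L L' : {set gT}) : Prop :=
  exists2 x, x \in L &
  exists2 phi : {perm gT}, phi \in Aut K &
    L' = [set phi y | y in x *: L] \/ L' = [set phi y | y in L :* x].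
End Refl.

From mathcomp Require Import all_boot all_fingroup.
Local Open Scope group_scope.

(* Left and right translations commute with [a o b = a b^-1 a], so they map
   circ-closed sets to circ-closed sets and [L(xX) = x L(X)], [L(Xx) = L(X) x].
   If [1] and [x] lie in [L = L(1 u A)] then so does [x^-1 = 1 o x]; hence
   [1 = x x^-1] lies in [xL], and adding [1] to the generators [x(1 u A)] of
   [xL] does not change their closure.  A translate [xL] of a reflection
   system by [x in L] is again one: it contains [x = x 1], hence
   [x^-1 (x l) = l] lies in the group it generates. *)

Section ReflClosure.
Variable gT : finGroupType.
Implicit Types (X Y L : {set gT}) (a b x : gT).

Lemma circ_closedP Y :
  reflect {in Y &, forall a b, circ a b \in Y} (circ_closed Y).
Proof.
apply: (iffP forall_inP) => [cY a b Ya Yb | cY a Ya].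
  exact: forall_inP (cY a Ya) b Yb.
by apply/forall_inP => b Yb; apply: cY.
Qed.

Lemma refl_closure_sub X : X \subset refl_closure X.
Proof. by apply/bigcapsP => Y /andP[]. Qed.

Lemma refl_closure_min X Y :
  X \subset Y -> circ_closed Y -> refl_closure X \subset Y.
Proof. by move=> sXY cY; apply: bigcap_inf; rewrite sXY cY. Qed.

Lemma circ_closed_refl_closure X : circ_closed (refl_closure X).
Proof.
apply/circ_closedP => a b /bigcapP Xa /bigcapP Xb.
apply/bigcapP => Y XY; have /andP[_ /circ_closedP cY] := XY.
exact: cY (Xa Y XY) (Xb Y XY).
Qed.

Lemma refl_closure_absorb X Y :
  Y \subset refl_closure X -> refl_closure (Y :|: X) = refl_closure X.
Proof.
move=> sYX; apply/eqP; rewrite eqEsubset !refl_closure_min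
  ?circ_closed_refl_closure // ?subUset ?sYX ?refl_closure_sub //.
exact: subset_trans (subsetUr Y X) (refl_closure_sub _).
Qed.

Lemma circ_closed_invg L x : circ_closed L -> 1 \in L -> x \in L -> x^-1 \in L.
Proof.
move=> /circ_closedP cL L1 Lx.
by have := cL _ _ L1 Lx; rewrite /circ mul1g mulg1.
Qed.

Lemma mulg_circ x a b : x * circ a b = circ (x * a) (x * b).
Proof. by rewrite /circ invMg !mulgA mulgKV. Qed.

Lemma circ_mulg x a b : circ a b * x = circ (a * x) (b * x).
Proof. by rewrite /circ invMg !mulgA mulgK. Qed.

Lemma circ_closed_lcoset x L : circ_closed L -> circ_closed (x *: L).
Proof.
move=> /circ_closedP cL.
apply/circ_closedP => _ _ /lcosetP[a La ->] /lcosetP[b Lb ->].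
by rewrite -mulg_circ mem_lcoset mulKg cL.
Qed.

Lemma circ_closed_rcoset x L : circ_closed L -> circ_closed (L :* x).
Proof.
move=> /circ_closedP cL.
apply/circ_closedP => _ _ /rcosetP[a La ->] /rcosetP[b Lb ->].
by rewrite -circ_mulg mem_rcoset mulgK cL.
Qed.

Lemma refl_closure_lcoset x X : refl_closure (x *: X) = x *: refl_closure X.
Proof.
have cl_sub y Y : refl_closure (y *: Y) \subset y *: refl_closure Y.
  by rewrite refl_closure_min ?circ_closed_lcoset ?circ_closed_refl_closure
    ?lcosetS ?refl_closure_sub.
apply/eqP; rewrite eqEsubset cl_sub /=.
by rewrite -(lcosetS x^-1) lcosetK -{1}(lcosetK x X).
Qed.

Lemma refl_closure_rcoset x X : refl_closure (X :* x) = refl_closure X :* x.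
Proof.
have cl_sub y Y : refl_closure (Y :* y) \subset refl_closure Y :* y.
  by rewrite refl_closure_min ?circ_closed_rcoset ?circ_closed_refl_closure
    ?rcosetS ?refl_closure_sub.
apply/eqP; rewrite eqEsubset cl_sub /=.
by rewrite -(rcosetS x^-1) rcosetK -{1}(rcosetK x X).
Qed.

Lemma refl_closure_pointed_lcoset A x :
    x \in refl_closure (1 |: A) ->
  refl_closure ([set 1; x] :|: x *: A) = x *: refl_closure (1 |: A).
Proof.
move=> Lx; have L1 : (1 : gT) \in refl_closure (1 |: A).
  by rewrite (subsetP (refl_closure_sub _)) ?setU11.
have xL1 : 1 \in x *: refl_closure (1 |: A).
  by rewrite mem_lcoset mulg1 circ_closed_invg ?circ_closed_refl_closure.
have -> : [set 1; x] :|: x *: A = 1 |: x *: (1 |: A).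
  by rewrite -setUA -!lcosetE /lcoset imsetU1 mulg1.
rewrite -refl_closure_lcoset refl_closure_absorb //.
by rewrite refl_closure_lcoset sub1set.
Qed.

Lemma refl_closure_pointed_rcoset A x :
    x \in refl_closure (1 |: A) ->
  refl_closure ([set 1; x] :|: A :* x) = refl_closure (1 |: A) :* x.
Proof.
move=> Lx; have L1 : (1 : gT) \in refl_closure (1 |: A).
  by rewrite (subsetP (refl_closure_sub _)) ?setU11.
have Lx1 : 1 \in refl_closure (1 |: A) :* x.
  by rewrite mem_rcoset mul1g circ_closed_invg ?circ_closed_refl_closure.
have -> : [set 1; x] :|: A :* x = 1 |: (1 |: A) :* x.
  by rewrite -setUA -!rcosetE /rcoset imsetU1 mul1g.
rewrite -refl_closure_rcoset refl_closure_absorb //.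
by rewrite refl_closure_rcoset sub1set.
Qed.

End ReflClosure.

Section ReflectionSystems.
Variables (gT : finGroupType) (K : {group gT}).
Implicit Types (L : {set gT}) (x : gT).

Lemma reflection_system_lcoset L x :
  reflection_system K L -> x \in L -> reflection_system K (x *: L).
Proof.
case=> sLK genL cL L1 Lx; have Kx := subsetP sLK x Lx.
have sxLK : x *: L \subset K by rewrite -(lcoset_id Kx) lcosetS.
split; rewrite ?circ_closed_lcoset //; last first.
  by rewrite mem_lcoset mulg1 circ_closed_invg.
apply/eqP; rewrite eqEsubset gen_subG sxLK -{1}genL gen_subG /=.
have xLx : x \in <<x *: L>> by rewrite mem_gen // mem_lcoset mulVg.
apply/subsetP => l Ll; rewrite -(mulKg x l) groupM ?groupV // mem_gen //.
by rewrite mem_lcoset mulKg.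
Qed.

Lemma reflection_system_rcoset L x :
  reflection_system K L -> x \in L -> reflection_system K (L :* x).
Proof.
case=> sLK genL cL L1 Lx; have Kx := subsetP sLK x Lx.
have sLxK : L :* x \subset K by rewrite -(rcoset_id Kx) rcosetS.
split; rewrite ?circ_closed_rcoset //; last first.
  by rewrite mem_rcoset mul1g circ_closed_invg.
apply/eqP; rewrite eqEsubset gen_subG sLxK -{1}genL gen_subG /=.
have Lxx : x \in <<L :* x>> by rewrite mem_gen // mem_rcoset mulgV.
apply/subsetP => l Ll; rewrite -(mulgK x l) groupM ?groupV // mem_gen //.
by rewrite mem_rcoset mulgK.
Qed.

Lemma imset_perm1 (S : {set gT}) : [set (1 : {perm gT}) y | y in S] = S.
Proof. by rewrite (eq_imset _ (@perm1 _)) imset_id. Qed.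

Lemma refl_equivalent_lcoset L x : x \in L -> refl_equivalent K L (x *: L).
Proof. by exists x => //; exists 1; rewrite ?group1 // !imset_perm1; left. Qed.

Lemma refl_equivalent_rcoset L x : x \in L -> refl_equivalent K L (L :* x).
Proof. by exists x => //; exists 1; rewrite ?group1 // !imset_perm1; right. Qed.

End ReflectionSystems.

Theorem lemma2p3 (gT : finGroupType) (K : {group gT}) (A : {set gT}) :
  A \subset K ->
  reflection_system K (refl_closure (1 |: A)) ->
  forall x, x \in refl_closure (1 |: A) ->
  let L := refl_closure (1 |: A) in
  [/\ refl_closure ([set 1; x] :|: x *: A) = x *: L,
      refl_closure ([set 1; x] :|: A :* x) = L :* x,
      reflection_system K (x *: L) /\ reflection_system K (L :* x)
    & refl_equivalent K L (x *: L) /\ refl_equivalent K L (L :* x)].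
Proof.
(* The first hypothesis is implied by the second. *)
move=> _ rsL x Lx L; split.
- exact: refl_closure_pointed_lcoset.
- exact: refl_closure_pointed_rcoset.
- by split; [apply: reflection_system_lcoset | apply: reflection_system_rcoset].
- by split; [apply: refl_equivalent_lcoset | apply: refl_equivalent_rcoset].
Qed.
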